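(* Let $A$ be a finite alphabet. Consider two words $u,u'\in A^*$, both of richness $m$, with rich factorizations $u=u_1a_1\cdots u_ma_mv$ and $u'=u'_1a_1\cdots u'_ma_mv'$ (with the same letters $a_1,\ldots,a_m$). Suppose that $v\sim_n v'$ and that $u_i\sim_{n+1}u'_i$ for all $i=1,\ldots,m$. Then $u\sim_{n+m}u'$.
   Context: A word is rich if every letter of $A$ occurs in it, and poor otherwise. $u$ is $\ell$-rich if $u=w_1\cdots w_\ell w'$ with $w_1,\ldots,w_\ell$ rich; the richness of $u$ is the largest such $\ell$. The rich factorization of $u$ is defined inductively: if $u$ is poor it is $u=v$ with $m=0$; otherwise $u_1a_1$ ($a_1$ a letter) is the shortest rich prefix of $u$, followed by the rich factorization $u_2a_2\cdots u_ma_mv$ of the remaining suffix. Thus $u=u_1a_1\cdots u_ma_mv$ with $m$ the richness of $u$. $u\sim_n v$ iff $u,v$ have the same (scattered) subwords of length at most $n$. *)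

From mathcomp Require Import all_boot.
Set Implicit Arguments. Unset Strict Implicit. Unset Printing Implicit Defensive.

Definition rich (A : finType) (w : seq A) : bool := [forall a : A, a \in w].

Definition sim (A : finType) (n : nat) (u v : seq A) : Prop :=
  forall w : seq A, size w <= n -> subseq w u = subseq w v.

(* rich_fact u fs v : u = u_1 a_1 ... u_m a_m v is the rich factorization of u,
   where fs = [:: (u_1,a_1); ...; (u_m,a_m)].  At each step u_i a_i is the
   shortest rich prefix of the remaining suffix, i.e. u_i a_i is rich and u_i
   is poor (every shorter prefix is a prefix of u_i, hence poor); the final
   remainder v is poor. *)
Fixpoint rich_fact (A : finType) (u : seq A) (fs : seq (seq A * A)) (v : seq A)
  : Prop :=
  match fs with
  | [::] => u = v /\ ~~ rich v
  | (ui, ai) :: fs' =>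
      exists r, u = ui ++ ai :: r /\ rich (rcons ui ai) /\ ~~ rich ui
                /\ rich_fact r fs' v
  end.

Definition lrich (A : finType) (l : nat) (u : seq A) : Prop :=
  exists (ws : seq (seq A)) (w' : seq A),
    size ws = l /\ all (@rich A) ws /\ u = flatten ws ++ w'.
Definition richness (A : finType) (u : seq A) (m : nat) : Prop :=
  lrich m u /\ forall l, lrich l u -> l <= m.

From mathcomp Require Import all_boot zify.
Set Implicit Arguments. Unset Strict Implicit. Unset Printing Implicit Defensive.

(* Induction on the factorizations u = u_1 a_1 r and u' = u'_1 a_1 r'.  Split
   a subword w of u of length at most n + m as p c q, where p is the longest
   prefix of w embedding in u_1.  If |p| > n, the first n + 1 letters of w
   embed in u_1, hence in u'_1, and the remaining at most m - 1 letters embed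
   in r', which contains every word of length m - 1 since it is (m - 1)-rich.
   Otherwise p embeds in u'_1 and c q embeds in a_1 r.  As u_1 a_1 is rich, c
   occurs in u_1 unless c = a_1, so p c would embed in u_1 when p is empty;
   hence q (if c = a_1) or c q (if p is nonempty) is a subword of r of length
   at most n + m - 1, thus a subword of r' by induction. *)

Definition universal (A : eqType) (j : nat) (s : seq A) : Prop :=
  forall w, size w <= j -> subseq w s.

Lemma mem_rich (A : finType) (s : seq A) c : rich s -> c \in s.
Proof. by move/forallP. Qed.

Lemma subseq_catP (T : eqType) (w s t : seq T) : subseq w (s ++ t) ->
  exists w1 w2, [/\ w = w1 ++ w2, subseq w1 s & subseq w2 t].
Proof.
elim: s w => [|c s IH] [|d w] /=.
- by exists [::], [::].
- by move=> sub_w; exists [::], (d :: w).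
- by exists [::], [::]; rewrite !sub0seq.
- case: eqP => [->|_] /IH [w1 [w2 [-> sub1 sub2]]].
    by exists (c :: w1), w2; rewrite /= eqxx.
  by exists w1, w2; split=> //; apply: subseq_trans sub1 (subseq_cons _ _).
Qed.

Lemma subseq_cat_maximal_prefix (T : eqType) (p r s t : seq T) (c : T) :
  subseq (p ++ c :: r) (s ++ t) -> ~~ subseq (rcons p c) s ->
  subseq (c :: r) t.
Proof.
move=> /subseq_catP [w1 [w2 [Ew sub1 sub2]]] not_sub.
have [le_w1p | lt_pw1] := leqP (size w1) (size p).
  have -> : c :: r = drop (size p - size w1) w2.
    by rewrite -(drop_size_cat (c :: r) (erefl (size p))) Ew drop_cat
               ltnNge le_w1p /=.
  exact: subseq_trans (drop_subseq _ _) sub2.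
have : subseq (take (size p).+1 w1) s.
  exact: subseq_trans (take_subseq _ _) sub1.
have -> : take (size p).+1 w1 = rcons p c.
  by rewrite -(takel_cat w2 lt_pw1) -Ew take_cat ltnNge leqnSn subSnn /= take0 cats1.
by rewrite (negbTE not_sub).
Qed.

Lemma maximal_prefix_subseq (T : eqType) (s w : seq T) :
  exists p r, [/\ w = p ++ r, subseq p s &
                  forall c r', r = c :: r' -> ~~ subseq (rcons p c) s].
Proof.
suff grow p r : subseq p s -> exists p' r', [/\ p ++ r = p' ++ r',
  subseq p' s & forall c r'', r' = c :: r'' -> ~~ subseq (rcons p' c) s].
  exact: grow [::] w (sub0seq s).
elim: r p => [|c r IH] p sub_p; first by exists p, [::]; split.
have [sub_pc | not_sub_pc] := boolP (subseq (rcons p c) s).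
  by have [p' [r' [E]]] := IH _ sub_pc; exists p', r'; rewrite -cat_rcons.
by exists p, (c :: r); split=> // _ _ [<- _].
Qed.

Lemma rich_fact_universal (A : finType) fs (r v : seq A) :
  rich_fact r fs v -> universal (size fs) r.
Proof.
elim: fs r => [|[x b] fs IH] r /=.
  by move=> _ w; rewrite leqn0 => /nilP ->; rewrite sub0seq.
move=> [r0 [-> [rich_xb [_ fact_r0]]]] [|c w] /=; first by rewrite sub0seq.
rewrite ltnS => size_w.
rewrite -cat_rcons -cat1s; apply: cat_subseq; first by rewrite sub1seq mem_rich.
exact: IH.
Qed.

Lemma subseq_rich_cat (A : finType) n j (x x' y y' : seq A) b :
  rich (rcons x b) -> sim n.+1 x x' -> sim (n + j) y y' -> universal j y' ->
  forall w, size w <= (n + j).+1 -> subseq w (x ++ b :: y) ->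
  subseq w (x' ++ b :: y').
Proof.
move=> rich_xb sim_x sim_y univ_y' w size_w sub_w.
have [p [r [Ew sub_p max_p]]] := maximal_prefix_subseq x w.
rewrite {}Ew size_cat in sub_w size_w *.
have [le_np | lt_pn] := leqP n.+1 (size p).
  rewrite -(cat_take_drop n.+1 p) -catA; apply: cat_subseq.
    rewrite -sim_x ?size_takel //.
    exact: subseq_trans (take_subseq _ _) sub_p.
  apply: subseq_trans (subseq_cons _ b); apply: univ_y'.
  rewrite size_cat size_drop; lia.
have sub_p' : subseq p x' by rewrite -sim_x // ltnW.
case: r max_p size_w sub_w => [|c r] max_p size_w sub_w.
  by rewrite cats0; apply: subseq_trans sub_p' (prefix_subseq _ _).
apply: cat_subseq => //.
have := subseq_cat_maximal_prefix sub_w (max_p c r erefl).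
have [-> | ne_cb] := eqVneq c b; rewrite /= ?eqxx.
  by move=> sub_r; rewrite -sim_y //; move: size_w => /=; lia.
rewrite (negbTE ne_cb) => sub_cr.
case: p {sub_p sub_p' lt_pn sub_w} max_p size_w => [|d p] max_p size_w.
  have := mem_rich c rich_xb.
  by rewrite mem_rcons in_cons (negbTE ne_cb) -sub1seq (negbTE (max_p c r erefl)).
by rewrite -sim_y //=; move: size_w => /=; lia.
Qed.

Lemma sim_sym (A : finType) n (u u' : seq A) : sim n u u' -> sim n u' u.
Proof. by move=> sim_u w size_w; rewrite sim_u. Qed.

Lemma sim_rich_cat (A : finType) n j (x x' y y' : seq A) b :
  rich (rcons x b) -> rich (rcons x' b) ->
  sim n.+1 x x' -> sim (n + j) y y' -> universal j y -> universal j y' ->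
  sim (n + j).+1 (x ++ b :: y) (x' ++ b :: y').
Proof.
move=> rich_xb rich_xb' sim_x sim_y univ_y univ_y' w size_w.
apply/idP/idP; first exact: subseq_rich_cat rich_xb sim_x sim_y univ_y' _ size_w.
exact: subseq_rich_cat rich_xb' (sim_sym sim_x) (sim_sym sim_y) univ_y _ size_w.
Qed.

Lemma sim_rich_fact (A : finType) n (a : seq A) (us us' : seq (seq A))
    (u u' v v' : seq A) :
  size us = size a -> size us' = size a ->
  rich_fact u (zip us a) v -> rich_fact u' (zip us' a) v' -> sim n v v' ->
  (forall i, i < size a -> sim n.+1 (nth [::] us i) (nth [::] us' i)) ->
  sim (n + size a) u u'.
Proof.
elim: a us us' u u' => [|b a IH] [|x us] [|x' us'] u u' //=.
  by move=> _ _ [-> _] [-> _]; rewrite addn0.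
move=> [size_us] [size_us'] [r [-> [rich_xb [_ fact_r]]]]
       [r' [-> [rich_xb' [_ fact_r']]]] sim_v sim_us.
have univ_r := rich_fact_universal fact_r.
have univ_r' := rich_fact_universal fact_r'.
rewrite size_zip size_us minnn in univ_r.
rewrite size_zip size_us' minnn in univ_r'.
rewrite addnS; apply: sim_rich_cat => //; first exact: (sim_us 0).
by apply: IH fact_r fact_r' sim_v _ => // i; apply: (sim_us i.+1).
Qed.

Theorem lemma5 (A : finType) (n m : nat) (u u' v v' : seq A)
  (us us' : seq (seq A)) (a : seq A) :
  richness u m -> richness u' m ->
  size us = m -> size us' = m -> size a = m ->
  rich_fact u (zip us a) v -> rich_fact u' (zip us' a) v' ->
  sim n v v' ->
  (forall i, i < m -> sim n.+1 (nth [::] us i) (nth [::] us' i)) ->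
  sim (n + m) u u'.
Proof.
(* The richness assumptions are implied by the factorizations. *)
move=> _ _ size_us size_us' size_a; rewrite -size_a in size_us size_us' *.
exact: sim_rich_fact.
Qed.
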